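(* Let $\mathtt L\in\{Y,Z\}$. As algebras of functions on $\mathcal C$ (on $\mathcal C^\circ$ if $\mathtt L=Z$), one has $\mathcal H_{\mathtt L}\subset\mathcal L_{\mathtt L}\subset\mathcal I_{\mathtt L}$.
   Context: Fix integers $m\ge2$, $n\ge1$, $\mathbf d=(d_0,\dots,d_{m-1})\in\mathbb N^m$ with $d_0\ge1$, $|\mathbf d|=\sum_sd_s$, and $\mathbf q=(q_0,\dots,q_{m-1})\in(\mathbb C^\times)^m$. Indices $s$ range over $\mathbb Z_m\cong\{0,\dots,m-1\}$; spin indices are pairs $(s,\alpha)$ with $1\le\alpha\le d_s$, totally ordered by $(s,\alpha)<(r,\beta)$ iff $s<r$, or $s=r$ and $\alpha<\beta$; $\rho:\{1,\dots,|\mathbf d|\}\to\{\text{spin indices}\}$ is the order-preserving bijection, and no spin index satisfies $(s,\alpha)\le\rho(0)$. $\mathcal M^\bullet$ is the variety of tuples $(X_s,Y_s,V_{s,\alpha},W_{s,\alpha})$ ($X_s,Y_s$ $n\times n$, $V_{s,\alpha}$ $1\times n$, $W_{s,\alpha}$ $n\times1$) with $\mathrm{Id}_n+X_sY_s$, $\mathrm{Id}_n+Y_sX_s$, $\mathrm{Id}_n+W_{s,\alpha}V_{s,\alpha}$ invertible and $1+V_{s,\alpha}W_{s,\alpha}\ne0$, with $\mathrm{GL}(n)^m$-action $g\cdot(X_s,Y_s,W_{s,\alpha},V_{s,\alpha})=(g_sX_sg_{s+1}^{-1},g_{s+1}Y_sg_s^{-1},g_sW_{s,\alpha},V_{s,\alpha}g_s^{-1})$.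 $X$ (resp. $Y$) is the $nm\times nm$ block matrix with $X_s$ in block $(s,s+1)$ (resp. $Y_s$ in block $(s+1,s)$); where $X$ is invertible, $Z=\sum_sZ_s$ with $Z_s=Y_s+X_s^{-1}$ in block $(s+1,s)$. $W_{s,\alpha}$ (resp. $V_{s,\alpha}$) is regarded as a column (resp. row) vector of length $nm$ supported in block $s$. $\mathcal C$ is the GIT quotient by $\mathrm{GL}(n)^m$ of the subvariety of $\mathcal M^\bullet$ defined by $(\mathrm{Id}_n+X_sY_s)(\mathrm{Id}_n+Y_{s-1}X_{s-1})^{-1}=q_s(\mathrm{Id}_n+W_{s,d_s}V_{s,d_s})\cdots(\mathrm{Id}_n+W_{s,1}V_{s,1})$ for all $s$; $\mathcal C^\circ$ is its open subset where $X$ is invertible. For $b\in\{0,\dots,|\mathbf d|\}$, $\Phi^{(b)}_s=(\mathrm{Id}_n+X_sY_s)(\mathrm{Id}_n+Y_{s-1}X_{s-1})^{-1}\prod^{\rightarrow}_{\alpha:(s,\alpha)\le\rho(b)}(\mathrm{Id}_n+W_{s,\alpha}V_{s,\alpha})^{-1}$ (increasing $\alpha$ left to right), $\Phi^{(b)}$ is the block diagonal matrix with blocks $\Phi^{(b)}_s$, and $\mathtt L^{(b)}=\Phi^{(b)}\mathtt L$. The algebras (of images in $\mathcal C$, resp. $\mathcal C^\circ$, of invariant functions) are: $\mathcal H_{\mathtt L}$ generated by $\operatorname{tr}(\mathtt L^k)$, $k\in\mathbb N$; $\mathcal L_{\mathtt L}$ generated by $\operatorname{tr}((\mathtt L^{(b)})^k)$,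 $k\in\mathbb N$, $0\le b\le|\mathbf d|$; $\mathcal I_{\mathtt L}$ generated by $\operatorname{tr}(\mathtt L^k)$ and $\operatorname{tr}(W_{s,\alpha}V_{r,\beta}\mathtt L^k)=V_{r,\beta}\mathtt L^kW_{s,\alpha}$, $k\in\mathbb N$, $(s,\alpha),(r,\beta)$ spin indices. *)

From HB Require Import structures.
From mathcomp Require Import all_boot all_order all_algebra.
From mathcomp Require Import Rstruct complex.
From Stdlib Require Import Rdefinitions.
Set Implicit Arguments. Unset Strict Implicit. Unset Printing Implicit Defensive.
Import Order.TTheory GRing.Theory Num.Theory.
Local Open Scope ring_scope.

Definition CC : numClosedFieldType := (Rdefinitions.R)[i].

Section Setup.
Variables (m n : nat) (d : 'I_m -> nat).

(* A point of the ambient affine space of tuples (X_s, Y_s, V_{s,a}, W_{s,a}).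
   Spin indices (s,alpha) with 1 <= alpha <= d_s are encoded zero-based as
   (s, a) with a : 'I_(d s), alpha = a+1. *)
Record point := Point {
  pX : 'I_m -> 'M[CC]_n;
  pY : 'I_m -> 'M[CC]_n;
  pV : forall s : 'I_m, 'I_(d s) -> 'rV[CC]_n;
  pW : forall s : 'I_m, 'I_(d s) -> 'cV[CC]_n }.

Definition Nbig := (\sum_(s < m) n)%N.
Definition bmx (B : 'I_m -> 'I_m -> 'M[CC]_n) : 'M[CC]_Nbig :=
  @mxblock CC m m (fun _ => n) (fun _ => n) B.

Definition mxpow (A : 'M[CC]_Nbig) (k : nat) : 'M[CC]_Nbig :=
  iter k (mulmx A) 1%:M.

Definition succ (s : 'I_m) : 'I_m := ordS s.
Definition pred (s : 'I_m) : 'I_m := ord_pred s.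

Definition bigX (p : point) : 'M[CC]_Nbig :=
  bmx (fun i j => if j == succ i then pX p i else 0).
Definition bigY (p : point) : 'M[CC]_Nbig :=
  bmx (fun i j => if i == succ j then pY p j else 0).
Definition bigZ (p : point) : 'M[CC]_Nbig :=
  bmx (fun i j => if i == succ j then pY p j + invmx (pX p j) else 0).

Definition bigW (p : point) (s : 'I_m) (a : 'I_(d s)) : 'M[CC]_(Nbig, 1) :=
  @mxcol CC m (fun _ => n) 1 (fun r => if r == s then pW p a else 0).
Definition bigV (p : point) (s : 'I_m) (a : 'I_(d s)) : 'M[CC]_(1, Nbig) :=
  @mxrow CC m (fun _ => n) 1 (fun r => if r == s then pV p a else 0).

Definition oprod (l : seq 'M[CC]_n) : 'M[CC]_n := foldr mulmx 1%:M l.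

Definition IWV (p : point) (s : 'I_m) (a : 'I_(d s)) : 'M[CC]_n :=
  1%:M + pW p a *m pV p a.

(* The subvariety of M^bullet whose GIT quotient is C *)
Definition in_Mbullet (p : point) : Prop :=
  (forall s, (1%:M + pX p s *m pY p s) \in unitmx) /\
  (forall s, (1%:M + pY p s *m pX p s) \in unitmx) /\
  (forall s (a : 'I_(d s)), IWV p a \in unitmx) /\
  (forall s (a : 'I_(d s)), (1%:M + pV p a *m pW p a) 0 0 != 0).

Definition moment (q : 'I_m -> CC) (p : point) : Prop :=
  forall s : 'I_m,
    (1%:M + pX p s *m pY p s) *m invmx (1%:M + pY p (pred s) *m pX p (pred s))
    = q s *: oprod [seq IWV p a | a <- rev (enum 'I_(d s))].

Definition in_C (q : 'I_m -> CC) (p : point) : Prop := in_Mbullet p /\ moment q p.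
Definition in_Ccirc (q : 'I_m -> CC) (p : point) : Prop :=
  in_C q p /\ bigX p \in unitmx.

(* position (0-based) of the spin index (s, a) in the total order; the
   spin indices (s,alpha) <= rho(b) are exactly those with pos < b. *)
Definition pos (s : 'I_m) (a : 'I_(d s)) : nat :=
  (\sum_(r < m | ltn r s) d r + nat_of_ord a)%N.

Definition Phis (b : nat) (p : point) (s : 'I_m) : 'M[CC]_n :=
  (1%:M + pX p s *m pY p s) *m invmx (1%:M + pY p (pred s) *m pX p (pred s))
  *m oprod [seq invmx (IWV p a) | a <- enum 'I_(d s) & ltn (@pos s a) b].

Definition Phi (b : nat) (p : point) : 'M[CC]_Nbig :=
  @mxdiag CC m (fun _ => n) (Phis b p).

Definition Lmx (isZ : bool) (p : point) : 'M[CC]_Nbig :=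
  if isZ then bigZ p else bigY p.
Definition Lb (isZ : bool) (b : nat) (p : point) : 'M[CC]_Nbig :=
  Phi b p *m Lmx isZ p.

Definition dom (isZ : bool) (q : 'I_m -> CC) : point -> Prop :=
  if isZ then in_Ccirc q else in_C q.

Definition genH (isZ : bool) (f : point -> CC) : Prop :=
  exists k : nat, f = fun p => \tr (mxpow (Lmx isZ p) k).
Definition genL (isZ : bool) (f : point -> CC) : Prop :=
  exists (k b : nat), leq b (\sum_(s < m) d s)%N /\
    f = fun p => \tr (mxpow (Lb isZ b p) k).
Definition genI (isZ : bool) (f : point -> CC) : Prop :=
  (exists k : nat, f = fun p => \tr (mxpow (Lmx isZ p) k)) \/
  (exists (k : nat) (s : 'I_m) (a : 'I_(d s)) (r : 'I_m) (b : 'I_(d r)),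
     f = fun p => \tr (bigW p a *m bigV p b *m mxpow (Lmx isZ p) k)).

End Setup.

(* The subalgebra (over CC) generated by a family G of functions, inside the
   algebra of functions on the set D (functions are identified when they agree
   on D). *)
Inductive gen_alg (T : Type) (D : T -> Prop) (G : (T -> CC) -> Prop)
  : (T -> CC) -> Prop :=
| ga_gen f : G f -> gen_alg D G f
| ga_cst (c : CC) : gen_alg D G (fun _ => c)
| ga_add f g : gen_alg D G f -> gen_alg D G g -> gen_alg D G (fun x => f x + g x)
| ga_mul f g : gen_alg D G f -> gen_alg D G g -> gen_alg D G (fun x => f x * g x)
| ga_ext f g : gen_alg D G f -> (forall x, D x -> f x = g x) -> gen_alg D G g.

Definition alg_incl (T : Type) (D : T -> Prop) (G1 G2 : (T -> CC) -> Prop) : Prop :=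
  forall f, gen_alg D G1 f -> gen_alg D G2 f.

From HB Require Import structures.
From mathcomp Require Import all_boot all_order all_algebra.
From mathcomp Require Import Rstruct complex.
Set Implicit Arguments. Unset Strict Implicit. Unset Printing Implicit Defensive.
Import GRing.Theory.
Local Open Scope ring_scope.

(* Write L^(b) = Phi^(b) L.  On C the moment map equation gives
   Phi^(b)_s = q_s * prod (Id + W_a V_a) over the spins a of block s that are
   not below rho(b) (in decreasing order).  Hence, with Q = diag(q_s Id),
     L^(b) = Q L + (finite sum of c * W_i (V_j L)),
   whose coefficients c are polynomials in the pairings V W, which are
   generators of I_L.
   Then H ⊂ L uses b = |d|, and L ⊂ I is the perturbation principle for A = Q L. *)

Lemma mx11_mul (x y : 'M[CC]_1) : (x *m y) 0 0 = x 0 0 * y 0 0.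
Proof. by rewrite mxE big_ord1. Qed.

Lemma col_mul11 k (w : 'cV[CC]_k) (s : 'M[CC]_1) : w *m s = s 0 0 *: w.
Proof. by rewrite {1}(mx11_scalar s) mul_mx_scalar. Qed.

Lemma mxpowD m n (A : 'M[CC]_(Nbig m n)) i j :
  mxpow A (i + j) = mxpow A i *m mxpow A j.
Proof.
elim: i => [|i IH]; first by rewrite add0n mul1mx.
by rewrite addSn /= -/(mxpow A (i + j)) IH mulmxA.
Qed.

Lemma mxpowSr m n (A : 'M[CC]_(Nbig m n)) k : mxpow A k.+1 = mxpow A k *m A.
Proof. by rewrite -addn1 mxpowD /= mulmx1. Qed.

Section GeneratedAlgebra.
Variables (T : Type) (D : T -> Prop) (G : (T -> CC) -> Prop).
Notation Alg := (gen_alg D G).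

Lemma alg_scale (c : CC) f : Alg f -> Alg (fun p => c * f p).
Proof. by move=> h; apply: ga_mul => //; apply: ga_cst. Qed.

Lemma alg_incl_of (G' : (T -> CC) -> Prop) :
  (forall f, G f -> gen_alg D G' f) -> alg_incl D G G'.
Proof.
move=> h f; elim => {f} [f /h //|c|f g _ hf _ hg|f g _ hf _ hg|f g _ hf e].
- exact: ga_cst.
- exact: ga_add.
- exact: ga_mul.
- exact: ga_ext hf e.
Qed.

End GeneratedAlgebra.

Section LowRank.
Variables (T : Type) (D : T -> Prop) (G : (T -> CC) -> Prop).
Notation Alg := (gen_alg D G).
Variables (m n : nat) (I : Type).
Notation N := (Nbig m n).
Variables (ww : I -> T -> 'cV[CC]_N) (vv : I -> T -> 'rV[CC]_N).

Inductive lowrank : (T -> 'M[CC]_N) -> Prop :=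
| lowrank0 F : (forall p, D p -> F p = 0) -> lowrank F
| lowrank_cons c i j F F' : Alg c -> lowrank F ->
    (forall p, D p -> F' p = c p *: (ww i p *m vv j p) + F p) -> lowrank F'.

Lemma lowrank_ext F F' : lowrank F -> (forall p, D p -> F p = F' p) -> lowrank F'.
Proof.
case=> [F0 h0|c i j F1 F0 hc h1 e] e'.
  by apply: lowrank0 => p Dp; rewrite -e' ?h0.
by apply: (lowrank_cons (i:=i) (j:=j) hc h1) => p Dp; rewrite -e' ?e.
Qed.

Lemma lowrank_add F F' : lowrank F -> lowrank F' -> lowrank (fun p => F p + F' p).
Proof.
move=> hF hF'; elim: hF => [F0 h0|c i j F1 F0 hc _ IH e].
  by apply: (lowrank_ext hF') => p Dp; rewrite h0 // add0r.
by apply: (lowrank_cons (i:=i) (j:=j) hc IH) => p Dp; rewrite e // addrA.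
Qed.

Lemma lowrank_scale (a : CC) F : lowrank F -> lowrank (fun p => a *: F p).
Proof.
elim=> [F0 h0|c i j F1 F0 hc _ IH e].
  by apply: lowrank0 => p Dp; rewrite h0 ?scaler0.
apply: (lowrank_cons (i:=i) (j:=j) (alg_scale a hc) IH) => p Dp.
by rewrite e // scalerDr scalerA.
Qed.

Lemma lowrank_sum (J : Type) (l : seq J) (F : J -> T -> 'M[CC]_N) :
  (forall k, lowrank (F k)) -> lowrank (fun p => \sum_(k <- l) F k p).
Proof.
move=> hF; elim: l => [|k l IH].
  by apply: lowrank0 => p _; rewrite big_nil.
by apply: (lowrank_ext (lowrank_add (hF k) IH)) => p _; rewrite big_cons.
Qed.

Lemma lowrank_lmul (u : T -> 'rV[CC]_N) i F :
  (forall j, Alg (fun p => (u p *m ww j p) 0 0)) ->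
  lowrank F -> lowrank (fun p => ww i p *m (u p *m F p)).
Proof.
move=> hu; elim=> [F0 h0|c j k F1 F0 hc _ IH e].
  by apply: lowrank0 => p Dp; rewrite h0 ?mulmx0.
apply: (lowrank_cons (i:=i) (j:=k) (ga_mul hc (hu j)) IH) => p Dp.
rewrite e // mulmxDr mulmxDr -scalemxAr -scalemxAr !mulmxA.
by rewrite -(mulmxA (ww i p) (u p) (ww j p)) col_mul11 -scalemxAl scalerA mulrC.
Qed.
Section Perturbation.
Variable A : T -> 'M[CC]_N.
Hypothesis trA_alg : forall k, Alg (fun p => \tr (mxpow (A p) k)).
Hypothesis pairA_alg :
  forall i j k, Alg (fun p => (vv i p *m mxpow (A p) k *m ww j p) 0 0).

(* The invariant propagated along the powers of a perturbation M of A: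
   the traces of A^k X and the pairings v_i A^h X A^k w_j lie in the algebra. *)
Record tame (X : T -> 'M[CC]_N) : Prop := Tame {
  tame_trace : forall k, Alg (fun p => \tr (mxpow (A p) k *m X p));
  tame_pairing : forall i j h k,
    Alg (fun p => (vv i p *m mxpow (A p) h *m X p *m mxpow (A p) k *m ww j p) 0 0) }.

Lemma tame1 : tame (fun _ => 1%:M).
Proof.
split => [k|i j h k].
  by apply: (ga_ext (trA_alg k)) => p _; rewrite mulmx1.
by apply: (ga_ext (pairA_alg i j (h + k))) => p _; rewrite mulmx1 mxpowD mulmxA.
Qed.

Lemma tame0 : tame (fun _ => 0).
Proof.
split => [k|i j h k]; apply: (ga_ext (ga_cst D G 0)) => p _.
  by rewrite mulmx0 mxtrace0.
by rewrite mulmx0 !mul0mx mxE.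
Qed.

Lemma tame_ext X Y : tame X -> (forall p, D p -> X p = Y p) -> tame Y.
Proof.
move=> [htr hpair] e; split => [k|i j h k].
  by apply: (ga_ext (htr k)) => p Dp; rewrite e.
by apply: (ga_ext (hpair i j h k)) => p Dp; rewrite e.
Qed.

Lemma tame_add X Y : tame X -> tame Y -> tame (fun p => X p + Y p).
Proof.
move=> [trX pX] [trY pY]; split => [k|i j h k].
  by apply: (ga_ext (ga_add (trX k) (trY k))) => p _; rewrite mulmxDr mxtraceD.
apply: (ga_ext (ga_add (pX i j h k) (pY i j h k))) => p _.
by rewrite mulmxDr !mulmxDl [in RHS]mxE.
Qed.

Lemma tame_mulA X : tame X -> tame (fun p => A p *m X p).
Proof.
move=> [trX pX]; split => [k|i j h k].
  by apply: (ga_ext (trX k.+1)) => p _; rewrite mxpowSr mulmxA.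
by apply: (ga_ext (pX i j h.+1 k)) => p _; rewrite mxpowSr !mulmxA.
Qed.

Lemma tame_rank1 c i j X : Alg c -> tame X ->
  tame (fun p => c p *: (ww i p *m vv j p) *m X p).
Proof.
move=> hc [trX pX]; split => [k|a b h k].
  apply: (ga_ext (ga_mul hc (pX j i 0%N k))) => p _.
  rewrite -scalemxAl -scalemxAr mxtraceZ mulmx1; congr (_ * _).
  rewrite (_ : _ *m (_ *m X p) = (mxpow (A p) k *m ww i p) *m (vv j p *m X p)).
    by rewrite mxtrace_mulC trace_mx11 !mulmxA.
  by rewrite !mulmxA.
apply: (ga_ext (ga_mul (ga_mul hc (pairA_alg a i h)) (pX j b 0%N k))) => p _.
rewrite -scalemxAl -scalemxAr -!scalemxAl [in RHS]mxE mulmx1 -mulrA -mx11_mul.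
suff -> : vv a p *m mxpow (A p) h *m (ww i p *m vv j p *m X p) *m mxpow (A p) k *m ww b p
  = (vv a p *m mxpow (A p) h *m ww i p) *m (vv j p *m X p *m mxpow (A p) k *m ww b p) by [].
by rewrite !mulmxA.
Qed.

Lemma tame_lowrank F X : lowrank F -> tame X -> tame (fun p => F p *m X p).
Proof.
move=> hF hX; elim: hF => [F0 h0|c i j F1 F0 hc _ IH e].
  by apply: (tame_ext tame0) => p Dp; rewrite h0 // mul0mx.
apply: (tame_ext (tame_add (tame_rank1 i j hc hX) IH)) => p Dp.
by rewrite e // mulmxDl.
Qed.

(* M^(k+1) = A M^k + (M - A) M^k, so all powers of M are tame. *)
Lemma tame_pow M : lowrank (fun p => M p - A p) -> forall k, tame (fun p => mxpow (M p) k).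
Proof.
move=> hMA; elim=> [|k IH]; first exact: tame1.
apply: (tame_ext (tame_add (tame_mulA IH) (tame_lowrank hMA IH))) => p _.
by rewrite -mulmxDl addrC subrK.
Qed.

Theorem trace_perturb M :
  lowrank (fun p => M p - A p) -> forall k, Alg (fun p => \tr (mxpow (M p) k)).
Proof.
move=> hMA k; apply: (ga_ext (tame_trace (tame_pow hMA k) 0)) => p _.
by rewrite mul1mx.
Qed.

End Perturbation.
End LowRank.

Section Blocks.
Variables (m n : nat) (d : 'I_m -> nat).
Notation N := (Nbig m n).
Notation pt := (point n d).

Definition blockdiag (D0 : 'I_m -> 'M[CC]_n) : 'M[CC]_N :=
  @mxdiag CC m (fun _ => n) D0.

Definition Ds (s : 'I_m) (X : 'M[CC]_n) : 'M[CC]_N :=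
  blockdiag (fun r => if r == s then X else 0).
Definition E (s : 'I_m) : 'M[CC]_N := Ds s 1%:M.

Lemma blockdiag_mul (D1 D2 : 'I_m -> 'M[CC]_n) :
  blockdiag D1 *m blockdiag D2 = blockdiag (fun i => D1 i *m D2 i).
Proof.
rewrite /blockdiag {2}/mxdiag mul_mxdiag_mxblock /mxdiag; apply: eq_mxblock => i j.
by case: eqVneq => [->|_]; rewrite ?conform_mx_id ?mulmx0.
Qed.

Lemma blockdiag_sum (D0 : 'I_m -> 'M[CC]_n) : blockdiag D0 = \sum_s Ds s (D0 s).
Proof.
rewrite /Ds /blockdiag -mxdiag_sum; apply: eq_mxdiag => i.
by rewrite (bigD1 i) //= eqxx big1 ?addr0 // => j /negPf; rewrite eq_sym => ->.
Qed.

Lemma DsD s X Y : Ds s (X + Y) = Ds s X + Ds s Y.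
Proof. by rewrite /Ds /blockdiag -mxdiagD; apply: eq_mxdiag => i; case: eqP; rewrite ?addr0. Qed.

Lemma DsM s X Y : Ds s X *m Ds s Y = Ds s (X *m Y).
Proof. by rewrite /Ds blockdiag_mul; apply: eq_mxdiag => i; case: eqP; rewrite ?mul0mx. Qed.

Lemma DsZ s (c : CC) X : Ds s (c *: X) = c *: Ds s X.
Proof.
have -> : c *: Ds s X = Ds s X *m blockdiag (fun _ => c%:M).
  by rewrite /blockdiag mxdiagZ mul_mx_scalar.
by rewrite /Ds blockdiag_mul; apply: eq_mxdiag => i; case: eqP; rewrite ?mul0mx ?mul_mx_scalar.
Qed.

Lemma sumE : \sum_s E s = 1%:M.
Proof. by rewrite -blockdiag_sum /blockdiag (mxdiagZ (p_ := fun _ => n) (1 : CC)). Qed.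

Lemma EE r s : E r *m E s = if r == s then E s else 0.
Proof.
rewrite /E /Ds blockdiag_mul; case: eqVneq => [->|ne].
  by apply: eq_mxdiag => i; case: eqP; rewrite ?mul1mx ?mul0mx.
rewrite -(mxdiag0 (p_ := fun _ => n)); apply: eq_mxdiag => i.
by case: (i =P r) => [->|_]; rewrite ?(negPf ne) ?mul0mx ?mulmx0.
Qed.

Lemma bmxE (B : 'I_m -> 'I_m -> 'M[CC]_n) s :
  bmx B *m E s = bmx (fun i j => if j == s then B i j else 0).
Proof.
rewrite /bmx /E /Ds /blockdiag mul_mxblock_mxdiag; apply: eq_mxblock => i j.
by case: eqP; rewrite ?mulmx1 ?mulmx0.
Qed.

Lemma Ebmx (B : 'I_m -> 'I_m -> 'M[CC]_n) s :
  E s *m bmx B = bmx (fun i j => if i == s then B i j else 0).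
Proof.
rewrite /bmx /E /Ds /blockdiag mul_mxdiag_mxblock; apply: eq_mxblock => i j.
by case: eqP; rewrite ?mul1mx ?mul0mx.
Qed.

Lemma Lshift isZ (p : pt) s : Lmx isZ p *m E s = E (succ s) *m Lmx isZ p.
Proof.
rewrite /Lmx; case: isZ; rewrite /bigZ /bigY bmxE Ebmx; apply: eq_mxblock => i j.
  all: (case: (j =P s) => [->|ne]; first by case: (i =P succ s));
  case: (i =P succ s) => [->|] //; case: (succ s =P succ j) => // /ordS_inj h;
  by case: ne.
Qed.

Lemma EW (p : pt) s (a : 'I_(d s)) : E s *m bigW p a = bigW p a.
Proof.
rewrite /E /Ds /blockdiag /bigW mul_mxdiag_mxcol; apply: eq_mxcol => i.
by case: eqP; rewrite ?mul1mx ?mul0mx.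
Qed.

Lemma VE (p : pt) s (a : 'I_(d s)) : bigV p a *m E s = bigV p a.
Proof.
rewrite /E /Ds /blockdiag /bigV mul_mxrow_mxdiag; apply: eq_mxrow => i.
by case: eqP; rewrite ?mulmx1 ?mulmx0.
Qed.

Lemma WV (p : pt) s (a a' : 'I_(d s)) :
  bigW p a *m bigV p a' = Ds s (pW p a *m pV p a').
Proof.
rewrite /bigW /bigV mul_mxcol_mxrow /Ds /blockdiag /mxdiag; apply: eq_mxblock => i j.
case: (i =P s) => [->|ne]; case: (j =P s) => [->|ne2];
  rewrite ?eqxx ?conform_mx_id ?mul0mx ?mulmx0 //.
- by case: (s =P j) => // h; case: ne2.
- by case: ifP.
- by case: ifP.
Qed.

End Blocks.

Section Cyclic.
Variables (m n : nat) (q : 'I_m -> CC).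
Hypothesis hm0 : (0 < m)%N.
Hypothesis hq : forall s, q s != 0.
Notation N := (Nbig m n).
Notation E := (@E m n).

Lemma val_iter_succ j (s : 'I_m) : val (iter j (@succ m) s) = ((s + j) %% m)%N.
Proof.
elim: j => [|j IH]; first by rewrite addn0 modn_small.
by rewrite /= IH -addn1 modnDml addn1 addnS.
Qed.

Lemma iter_succ_fix k (s : 'I_m) : (iter k (@succ m) s == s) = (m %| k)%N.
Proof.
apply/eqP/idP => [h|h].
  have := congr1 val h; rewrite val_iter_succ => e.
  have : (s + k == s + 0 %[mod m])%N by rewrite addn0 e modn_small.
  by rewrite eqn_modDl mod0n.
by apply: val_inj; rewrite val_iter_succ /= -modnDmr (eqP h) addn0 modn_small.
Qed.

Definition cycprod (s : 'I_m) k := \prod_(i < k) q (iter i.+1 (@succ m) s).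

Lemma cycprod_succ k s : (m %| k)%N -> cycprod (succ s) k = cycprod s k.
Proof.
move=> hk; apply: (mulfI (hq (succ s))).
have -> : q (succ s) * cycprod (succ s) k = \prod_(i < k.+1) q (iter i.+1 (@succ m) s).
  by rewrite big_ord_recl /cycprod; congr (_ * _); apply: eq_bigr => i _; rewrite /= -iterSr.
rewrite big_ord_recr /= mulrC; congr (_ * _).
by move: (iter_succ_fix k s); rewrite hk => /eqP ->.
Qed.

Definition s0 : 'I_m := Ordinal hm0.

Lemma cycprod_const k s : (m %| k)%N -> cycprod s k = cycprod s0 k.
Proof.
move=> hk; have -> : s = iter s (@succ m) s0.
  by apply: val_inj; rewrite val_iter_succ /= add0n modn_small.
by elim: (nat_of_ord s) => [|j IH] //=; rewrite cycprod_succ.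
Qed.

Lemma cycprod_neq0 k s : cycprod s k != 0.
Proof. exact/prodf_neq0. Qed.

Definition qdiag : 'M[CC]_N := \sum_s q s *: E s.

Lemma qdiagE r : qdiag *m E r = q r *: E r.
Proof.
rewrite /qdiag mulmx_suml (bigD1 r) //= -scalemxAl EE eqxx big1 ?addr0 //.
by move=> s /negPf ns; rewrite -scalemxAl EE ns scaler0.
Qed.

Lemma trace_blocks (X : 'M[CC]_N) : \tr X = \sum_s \tr (X *m E s).
Proof. by rewrite -raddf_sum -mulmx_sumr sumE mulmx1. Qed.

Variable L : 'M[CC]_N.
Hypothesis hL : forall s, L *m E s = E (succ s) *m L.

Lemma Lpow_E j s : mxpow L j *m E s = E (iter j (@succ m) s) *m mxpow L j.
Proof.
elim: j => [|j IH]; first by rewrite /= mul1mx mulmx1.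
by rewrite /= -/(mxpow L j) -mulmxA IH mulmxA hL mulmxA.
Qed.

(* Each step of (Q L)^k picks up the q of the block it lands in. *)
Lemma qdiagLpow j s : mxpow (qdiag *m L) j *m E s = cycprod s j *: (mxpow L j *m E s).
Proof.
elim: j => [|j IH]; first by rewrite /cycprod big_ord0 scale1r.
rewrite /= -/(mxpow L j) -/(mxpow (qdiag *m L) j) -mulmxA IH -scalemxAr.
have e : L *m (mxpow L j *m E s) = E (succ (iter j (@succ m) s)) *m (L *m mxpow L j).
  by rewrite Lpow_E mulmxA hL mulmxA.
rewrite -mulmxA e -(mulmxA qdiag) e mulmxA qdiagE -scalemxAl scalerA.
by rewrite /cycprod big_ord_recr /= mulmxA.
Qed.

(* A power L^k with m not dividing k moves every block, so it is traceless. *)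
Lemma trace_Lpow_E k s : ~~ (m %| k)%N -> \tr (mxpow L k *m E s) = 0.
Proof.
move=> hk.
have -> : mxpow L k *m E s = mxpow L k *m E s *m E s by rewrite -mulmxA EE eqxx.
rewrite mxtrace_mulC Lpow_E mulmxA EE.
by rewrite eq_sym iter_succ_fix (negPf hk) mul0mx mxtrace0.
Qed.

Lemma trace_Lpow k : ~~ (m %| k)%N -> \tr (mxpow L k) = 0.
Proof. by move=> hk; rewrite trace_blocks big1 // => s _; rewrite trace_Lpow_E. Qed.

Lemma trace_qdiagLpow k : \tr (mxpow (qdiag *m L) k) =
  if (m %| k)%N then cycprod s0 k * \tr (mxpow L k) else 0.
Proof.
rewrite trace_blocks; case: ifP => hk.
  rewrite [in RHS]trace_blocks mulr_sumr; apply: eq_bigr => s _.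
  by rewrite qdiagLpow mxtraceZ cycprod_const.
by rewrite big1 // => s _; rewrite qdiagLpow mxtraceZ trace_Lpow_E ?hk // mulr0.
Qed.

End Cyclic.

Lemma oprod_rcons k (l : seq 'M[CC]_k) x : oprod (rcons l x) = oprod l *m x.
Proof. by elim: l => [|y l IH] /=; rewrite ?mulmx1 ?mul1mx // IH mulmxA. Qed.

Lemma oprod_cancel_prefix k (X : Type) (f : X -> 'M[CC]_k) (P : pred X) (l : seq X) :
  (forall x, f x \in unitmx) -> pairwise (fun x y => P y ==> P x) l ->
  oprod [seq f x | x <- rev l] *m oprod [seq invmx (f x) | x <- filter P l]
  = oprod [seq f x | x <- rev (filter (predC P) l)].
Proof.
move=> hu; elim: l => [|x l IH] /=; first by rewrite mulmx1.
move=> /andP[hx hl]; rewrite rev_cons map_rcons oprod_rcons.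
case: ifP => Px /=.
  by rewrite -mulmxA (mulmxA (f x)) mulmxV // mul1mx IH.
have notP : all (predC P) l by apply: sub_all hx => y /=; rewrite Px implybF.
have -> : filter P l = [::].
  by apply/nilP; rewrite /nilp size_filter -leqn0 leqNgt -has_count -all_predC.
have -> : filter (predC P) l = l by apply/all_filterP.
by rewrite /= mulmx1 rev_cons map_rcons oprod_rcons.
Qed.

Section PhiDecomposition.
Variables (m n : nat) (d : 'I_m -> nat) (q : 'I_m -> CC) (isZ : bool).
Notation N := (Nbig m n).
Notation pt := (point n d).

Lemma pos_prefix s b :
  pairwise (fun x y : 'I_(d s) => (pos y < b)%N ==> (pos x < b)%N) (enum 'I_(d s)).
Proof.
have h : pairwise (relpre val ltn) (enum 'I_(d s)).
  rewrite -pairwise_map val_enum_ord -sorted_pairwise; first exact: iota_ltn_sorted.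
  exact: ltn_trans.
apply: sub_pairwise h => x y /= xy; apply/implyP => hy.
by apply: leq_ltn_trans hy; rewrite /pos leq_add2l ltnW.
Qed.

Definition tail_spins b s : seq 'I_(d s) :=
  rev [seq a <- enum 'I_(d s) | (b <= pos a)%N].

Lemma Phis_moment b (p : pt) s : in_C q p ->
  Phis b p s = q s *: oprod [seq IWV p a | a <- tail_spins b s].
Proof.
move=> [[_ [_ [hu _]]] hmo]; rewrite /Phis hmo -scalemxAl.
rewrite (oprod_cancel_prefix (hu s) (pos_prefix s b)).
congr (_ *: oprod (map _ (rev _))).
by apply: eq_filter => a; rewrite /predC /= ltnNge negbK.
Qed.

Lemma tail_spins_full s : tail_spins (\sum_(r < m) d r) s = [::].
Proof.
have pos_lt (a : 'I_(d s)) : (pos a < \sum_(r < m) d r)%N.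
  rewrite /pos [X in (_ < X)%N](bigID (fun r : 'I_m => ltn r s)) /= ltn_add2l.
  by rewrite (bigD1 s) ?ltnn //=; exact: leq_trans (ltn_ord a) (leq_addr _ _).
rewrite /tail_spins (@eq_filter _ _ pred0) ?filter_pred0 // => a.
by rewrite /= leqNgt pos_lt.
Qed.

End PhiDecomposition.

Section Inclusions.
Variables (m n : nat) (d : 'I_m -> nat) (q : 'I_m -> CC) (isZ : bool).
Hypothesis hm0 : (0 < m)%N.
Hypothesis hq : forall s, q s != 0.
Notation N := (Nbig m n).
Notation pt := (point n d).
Notation E := (@E m n).
Notation L := (Lmx isZ).
Notation Q := (qdiag n q).
Notation AlgI := (gen_alg (@dom m n d isZ q) (@genI m n d isZ)).
Notation AlgL := (gen_alg (@dom m n d isZ q) (@genL m n d isZ)).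

Lemma dom_in_C (p : pt) : dom isZ q p -> in_C q p.
Proof. by rewrite /dom; case: isZ => // -[]. Qed.

Definition spin := {s : 'I_m & 'I_(d s)}.
Definition spinW (i : spin) (p : pt) : 'cV[CC]_N := bigW p (tagged i).
Definition spinVL (i : spin) (p : pt) : 'rV[CC]_N := bigV p (tagged i) *m L p.
Notation Lowrank := (lowrank (@dom m n d isZ q) (@genI m n d isZ) spinW spinVL).

(* The generators tr(W_j V_i L^k) of I_L; for k = 0 they are the pairings V_i W_j. *)
Lemma spin_trace_alg (i j : spin) k :
  AlgI (fun p => \tr (bigW p (tagged j) *m bigV p (tagged i) *m mxpow (L p) k)).
Proof. by apply: ga_gen; right; exists k, (tag j), (tagged j), (tag i), (tagged i). Qed.

Lemma spin_pairing_alg (i j : spin) : AlgI (fun p => (bigV p (tagged i) *m spinW j p) 0 0).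
Proof.
apply: (ga_ext (spin_trace_alg i j 0)) => p _.
by rewrite mulmx1 mxtrace_mulC trace_mx11.
Qed.

(* The block-s embedding of an ordered product of factors Id + W_a V_a,
   minus the block projector and followed by L, is a low-rank term:
   expanding the product yields only W_x (V_y L) terms with coefficients
   that are products of pairings V W. *)
Lemma lowrank_block_prod s (la : seq 'I_(d s)) :
  Lowrank (fun p => (Ds s (oprod [seq IWV p a | a <- la]) - E s) *m L p).
Proof.
elim: la => [|x la IH]; first by apply: lowrank0 => p _; rewrite subrr mul0mx.
pose xi : spin := Tagged (fun s => 'I_(d s)) x.
pose P (p : pt) := Ds s (oprod [seq IWV p a | a <- la]).
(* ((E_s + W_x V_x) P - E_s) L = (P - E_s) L + W_x (V_x L) + W_x V_x (P - E_s) L *)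
have hstep : Lowrank (fun p =>
    spinW xi p *m spinVL xi p + spinW xi p *m (bigV p x *m ((P p - E s) *m L p))).
  apply: (lowrank_cons (c := fun _ => 1) (i := xi) (j := xi) (ga_cst _ _ 1)
    (lowrank_lmul xi (spin_pairing_alg xi) IH)) => p _.
  by rewrite scale1r.
apply: (lowrank_ext (lowrank_add IH hstep)) => p _.
have EP : E s *m P p = P p by rewrite DsM mul1mx.
rewrite /= -DsM DsD -WV -/(E s) -/(P p) [(_ + _) *m P p]mulmxDl EP /spinW /spinVL.
rewrite !mulmxBl mulmxBr !mulmxA (VE p x) !mulmxDl mulmxBr !mulmxA /=.
by rewrite (addrC (bigW p x *m bigV p x *m L p)) subrK addrAC.
Qed.

Lemma Lb_decomp b (p : pt) : in_C q p ->
  Lb isZ b p - Q *m L p =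
  \sum_s q s *: ((Ds s (oprod [seq IWV p a | a <- tail_spins d b s]) - E s) *m L p).
Proof.
move=> hC; rewrite /Lb /qdiag; change (Phi b p) with (blockdiag (Phis b p)).
rewrite blockdiag_sum !mulmx_suml -sumrB; apply: eq_bigr => s _.
by rewrite (Phis_moment _ _ hC) DsZ -!scalemxAl -scalerBr mulmxBl.
Qed.

Lemma lowrank_Lb b : Lowrank (fun p => Lb isZ b p - Q *m L p).
Proof.
have hsum := lowrank_sum (index_enum 'I_m) (fun s => lowrank_scale (q s)
  (lowrank_block_prod (tail_spins d b s))).
by apply: (lowrank_ext hsum) => p /dom_in_C hC; rewrite Lb_decomp.
Qed.

Lemma Lb_full (p : pt) : dom isZ q p -> Lb isZ (\sum_(r < m) d r) p = Q *m L p.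
Proof.
move=> /dom_in_C hC; apply/eqP; rewrite -subr_eq0 Lb_decomp //.
by apply/eqP/big1 => s _; rewrite tail_spins_full /= subrr mul0mx scaler0.
Qed.

(* Q L satisfies the hypotheses of the perturbation principle in I_L. *)
Lemma trace_qdiagL_alg k : AlgI (fun p => \tr (mxpow (Q *m L p) k)).
Proof.
case: (boolP (m %| k)%N) => hk.
  have gen : AlgI (fun p => \tr (mxpow (L p) k)) by apply: ga_gen; left; exists k.
  apply: (ga_ext (alg_scale (cycprod q (s0 hm0) k) gen)) => p _.
  by rewrite (trace_qdiagLpow hm0 hq (Lshift isZ p)) hk.
apply: (ga_ext (ga_cst _ _ 0)) => p _.
by rewrite (trace_qdiagLpow hm0 hq (Lshift isZ p)) (negPf hk).
Qed.

Lemma pairing_qdiagL_alg (i j : spin) k :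
  AlgI (fun p => (spinVL i p *m mxpow (Q *m L p) k *m spinW j p) 0 0).
Proof.
apply: (ga_ext (alg_scale (cycprod q (tag j) k) (spin_trace_alg i j k.+1))) => p _.
rewrite /spinVL /spinW -(EW p (tagged j)) !mulmxA -(mulmxA _ _ (E (tag j))).
rewrite (qdiagLpow q (Lshift isZ p)) -scalemxAr -scalemxAl mxE; congr (_ * _).
rewrite -/(mxpow (L p) k) EW !mulmxA -(mulmxA _ (E (tag j))) EW.
by rewrite -!mulmxA mxtrace_mulC trace_mx11 !mulmxA.
Qed.

(* tr(L^k) vanishes unless m | k, and then it is a nonzero multiple of
   tr((L^(|d|))^k) = tr((Q L)^k). *)
Theorem H_sub_L : alg_incl (@dom m n d isZ q) (@genH m n d isZ) (@genL m n d isZ).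
Proof.
apply: alg_incl_of => f [k ->].
case: (boolP (m %| k)%N) => hk; last first.
  by apply: (ga_ext (ga_cst _ _ 0)) => p _; rewrite (trace_Lpow (Lshift isZ p)).
have gen : AlgL (fun p => \tr (mxpow (Lb isZ (\sum_(r < m) d r) p) k)).
  by apply: ga_gen; exists k, (\sum_(r < m) d r).
apply: (ga_ext (alg_scale (cycprod q (s0 hm0) k)^-1 gen)) => p Dp.
rewrite Lb_full // (trace_qdiagLpow hm0 hq (Lshift isZ p)) hk mulrA mulVf ?mul1r //.
exact: cycprod_neq0.
Qed.

(* tr((L^(b))^k) is the trace of a power of a low-rank perturbation of Q L. *)
Theorem L_sub_I : alg_incl (@dom m n d isZ q) (@genL m n d isZ) (@genI m n d isZ).
Proof.
apply: alg_incl_of => f [k [b [_ ->]]].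
exact: (trace_perturb trace_qdiagL_alg pairing_qdiagL_alg (lowrank_Lb b)).
Qed.

End Inclusions.

Theorem lemma5p5 (m n : nat) (d : 'I_m -> nat) (q : 'I_m -> CC)
  (hm : (2 <= m)%N) (hn : (1 <= n)%N)
  (hd0 : forall s : 'I_m, val s = 0%N -> (1 <= d s)%N)
  (hq : forall s : 'I_m, q s != 0)
  (isZ : bool) :
  alg_incl (@dom m n d isZ q) (@genH m n d isZ) (@genL m n d isZ) /\
  alg_incl (@dom m n d isZ q) (@genL m n d isZ) (@genI m n d isZ).
Proof.
have hm0 : (0 < m)%N := ltnW hm.
by split; [exact: H_sub_L hm0 hq | exact: L_sub_I hm0 hq].
Qed.
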